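(* A family of structures $\mathfrak{K}$ is $\mathbf{PL}$-learnable if and only if $\mathfrak{K}$ is a $\Sigma^{\mathrm{inf}}_2$-antichain, i.e., for any two distinct $\mathcal{A},\mathcal{B}\in\mathfrak{K}$ there are $\Sigma^{\mathrm{inf}}_2$ sentences $\varphi,\psi$ with $\mathcal{A}\models\varphi$, $\mathcal{B}\not\models\varphi$, $\mathcal{B}\models\psi$, $\mathcal{A}\not\models\psi$.
   Context: All structures are countable, have domain $\mathbb{N}$, are in a finite relational signature, and are identified with their atomic diagrams. A family of structures $\mathfrak{K}$ is a countable set of pairwise nonisomorphic such structures. $\mathcal{S}\restriction_s$ is the finite substructure of $\mathcal{S}$ on $\{0,\dots,s\}$. $\mathrm{LD}(\mathfrak{K})$ is the set of structures with domain $\mathbb{N}$ isomorphic to a member of $\mathfrak{K}$. The hypothesis space is $\{\ulcorner\mathcal{A}\urcorner:\mathcal{A}\in\mathfrak{K}\}\cup\{?\}$; a learner is an arbitrary function $\mathbf{M}$ from $\{\mathcal{S}\restriction_s:\mathcal{S}\in\mathrm{LD}(\mathfrak{K})\}$ to the hypothesis space. $\mathfrak{K}$ is $\mathbf{PL}$-learnable (partially learnable) if there is a learner $\mathbf{M}$ such that for every $\mathcal{S}\in\mathrm{LD}(\mathfrak{K})$ and every $\mathcal{A}\in\mathfrak{K}$: the set $\{n:\mathbf{M}(\mathcal{S}\restriction_n)=\ulcorner\mathcal{A}\urcorner\}$ is infinite iff $\mathcal{A}\cong\mathcal{S}$ (the symbol $?$ may be output infinitely often). Infinitary logic $\mathcal{L}_{\omega_1\omega}$: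 $\Sigma^{\mathrm{inf}}_0=\Pi^{\mathrm{inf}}_0$ formulas are finitary quantifier-free; a $\Sigma^{\mathrm{inf}}_\alpha$ formula is a countable disjunction $\bigvee_i\exists\bar y_i\,\psi_i$ with $\psi_i\in\Pi^{\mathrm{inf}}_{\beta_i}$, $\beta_i<\alpha$; a $\Pi^{\mathrm{inf}}_\alpha$ formula is a countable conjunction $\bigwedge_i\forall\bar y_i\,\psi_i$ with $\psi_i\in\Sigma^{\mathrm{inf}}_{\beta_i}$, $\beta_i<\alpha$ (free variables among a fixed finite tuple). *)

From mathcomp Require Import all_boot.
Set Implicit Arguments. Unset Strict Implicit. Unset Printing Implicit Defensive.

(* A finite relational signature is a list of arities; relation symbols are
   the indices 'I_(size sig), symbol i having arity (nth 0 sig i). *)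
Definition arity (sig : seq nat) (i : 'I_(size sig)) : nat := nth 0 sig i.

Definition structure (sig : seq nat) : Type :=
  forall i : 'I_(size sig), (arity i).-tuple nat -> bool.

Section Structures.
Variable sig : seq nat.

Definition iso (A B : structure sig) : Prop :=
  exists f : nat -> nat, bijective f /\
    forall (i : 'I_(size sig)) (t : (arity i).-tuple nat),
      B i (map_tuple f t) = A i t.

(* The finite substructure S|s on {0,...,s}, represented by the pair
   (s, relations of S restricted to tuples from {0,...,s}). *)
Definition restrict (S : structure sig) (s : nat) : nat * structure sig :=
  (s, fun (i : 'I_(size sig)) (t : (arity i).-tuple nat) =>
        all (fun x => x <= s) t && S i t).

Inductive qf : Type :=
  | QTrue | QFalse
  | QEq (x y : nat)
  | QRel (i : 'I_(size sig)) (xs : (arity i).-tuple nat)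
  | QNeg (q : qf)
  | QAnd (q1 q2 : qf)
  | QOr (q1 q2 : qf).

Fixpoint qvars (q : qf) : seq nat :=
  match q with
  | QTrue | QFalse => [::]
  | QEq x y => [:: x; y]
  | QRel _ xs => val xs
  | QNeg q => qvars q
  | QAnd q1 q2 | QOr q1 q2 => qvars q1 ++ qvars q2
  end.

Fixpoint qsat (A : structure sig) (e : nat -> nat) (q : qf) : bool :=
  match q with
  | QTrue => true
  | QFalse => false
  | QEq x y => e x == e y
  | QRel i xs => A i (map_tuple e xs)
  | QNeg q => ~~ qsat A e q
  | QAnd q1 q2 => qsat A e q1 && qsat A e q2
  | QOr q1 q2 => qsat A e q1 || qsat A e q2
  end.

(* Infinitary formulas: countable disjunctions/conjunctions are indexed by a
   subset {i | P i} of nat (this covers every countable index set, including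
   finite and empty ones); quantifiers bind a finite tuple ys of variables. *)
Inductive form : Type :=
  | FQf (q : qf)
  | FOr (P : nat -> bool) (f : nat -> form)
  | FAnd (P : nat -> bool) (f : nat -> form)
  | FEx (ys : seq nat) (phi : form)
  | FAll (ys : seq nat) (phi : form).

Fixpoint isSigma (n : nat) (phi : form) {struct phi} : Prop :=
  match phi with
  | FQf _ => n = 0
  | FOr P f => 0 < n /\ forall i, P i ->
      match f i with
      | FEx _ psi => exists b, b < n /\ isPi b psi
      | _ => False
      end
  | _ => False
  end
with isPi (n : nat) (phi : form) {struct phi} : Prop :=
  match phi with
  | FQf _ => n = 0
  | FAnd P f => 0 < n /\ forall i, P i ->
      match f i with
      | FAll _ psi => exists b, b < n /\ isSigma b psi
      | _ => False
      end
  | _ => False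
  end.

Fixpoint fv_in (xs : seq nat) (phi : form) : Prop :=
  match phi with
  | FQf q => all (fun x => x \in xs) (qvars q)
  | FOr P f | FAnd P f => forall i, P i -> fv_in xs (f i)
  | FEx ys psi | FAll ys psi => fv_in (ys ++ xs) psi
  end.

Definition sentence (phi : form) : Prop := fv_in [::] phi.

Fixpoint sat (A : structure sig) (e : nat -> nat) (phi : form) : Prop :=
  match phi with
  | FQf q => qsat A e q
  | FOr P f => exists i, P i /\ sat A e (f i)
  | FAnd P f => forall i, P i -> sat A e (f i)
  | FEx ys psi => exists g : nat -> nat,
      sat A (fun x => if x \in ys then g x else e x) psi
  | FAll ys psi => forall g : nat -> nat,
      sat A (fun x => if x \in ys then g x else e x) psi
  end.

(* A |= phi for a sentence phi (the assignment is irrelevant). *)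
Definition models (A : structure sig) (phi : form) : Prop := sat A (fun _ => 0) phi.

Definition Sigma2_sentence (phi : form) : Prop := isSigma 2 phi /\ sentence phi.

Variable I : Type.

Definition structure_family (K : I -> structure sig) : Prop :=
  (exists c : I -> nat, injective c) /\
  (forall i j, iso (K i) (K j) -> i = j).

Definition LD (K : I -> structure sig) (S : structure sig) : Prop :=
  exists j, iso (K j) S.

(* Hypotheses: Some i = the code of K i, None = '?'.  A learner is an arbitrary
   function from finite substructures S|s (pairs (s, S|s)) to hypotheses. *)
Definition PL_learnable (K : I -> structure sig) : Prop :=
  exists M : nat * structure sig -> option I,
    forall S, LD K S -> forall i,
      ((forall m, exists n, m <= n /\ M (restrict S n) = Some i) <-> iso (K i) S).

Definition Sigma2_antichain (K : I -> structure sig) : Prop :=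
  forall i j, i <> j ->
    exists phi psi, Sigma2_sentence phi /\ Sigma2_sentence psi /\
      models (K i) phi /\ ~ models (K j) phi /\
      models (K j) psi /\ ~ models (K i) psi.

End Structures.

(* A Sigma^inf_2 sentence  \/_k exists y. /\_l forall z. theta  holds in S iff some
   witness (k, y) is never refuted by a finite substructure S|n.

   Learnable => antichain: suppose every Sigma^inf_2 sentence true in A = K i is true in
   B = K j.  For each finite tuple a of A, B satisfies the Sigma^inf_2 sentence "there is
   b such that every finite extension of b in B is realised in A over a".  Each extension
   stage therefore can borrow an initial segment of a copy of B on which the learner has
   already guessed j, realised inside A; taking care to eventually enumerate everything,
   the stages build a copy of A on which the learner guesses j infinitely often, so the
   copy is also isomorphic to B, contradicting i <> j.

   Antichain => learnable: with phi_ji true in K j and false in K i, a structure S in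
   LD(K) is a copy of K i iff every witness of every phi_ji (j <> i) is eventually
   refuted, a Pi_2 condition.  The learner counts, for each i, the longest initial run of
   such witnesses already refuted and outputs the i of least code whose count just grew:
   the true index grows infinitely often, every other index only finitely often. *)

From mathcomp Require Import all_boot.
From Stdlib Require Import ClassicalEpsilon FunctionalExtensionality Classical.
Set Implicit Arguments. Unset Strict Implicit. Unset Printing Implicit Defensive.

Definition classicb (P : Prop) : bool :=
  if excluded_middle_informative P then true else false.

Lemma classicbP (P : Prop) : reflect P (classicb P).
Proof. by rewrite /classicb; case: excluded_middle_informative => h; constructor. Qed.

Lemma map_tuple_comp n (f g : nat -> nat) (t : n.-tuple nat) :
  map_tuple f (map_tuple g t) = map_tuple (f \o g) t.
Proof. by apply: val_inj; rewrite /= map_comp. Qed.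

Lemma map_tupleK n (f g : nat -> nat) : cancel g f ->
  cancel (@map_tuple n _ _ g) (map_tuple f).
Proof. by move=> gK t; apply: val_inj; exact: (mapK gK). Qed.

Lemma all_flatten (T : Type) (p : pred T) (l : seq (seq T)) :
  all p (flatten l) = all (all p) l.
Proof. by elim: l => //= s l <-; rewrite all_cat. Qed.

Section Isomorphism.
Variable sig : seq nat.
Implicit Types (A B S : structure sig) (e f g : nat -> nat).

Definition pullback B g : structure sig := fun i t => B i (map_tuple g t).

Lemma iso_pullback B g : bijective g -> iso B (pullback B g).
Proof.
case=> h gK hK; exists h; split; first by exists g.
by move=> i t; rewrite /pullback map_tupleK.
Qed.

Lemma iso_sym A B : iso A B -> iso B A.
Proof.
case=> f [[g fK gK] AB]; exists g; split; first by exists f.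
by move=> i t; rewrite -AB map_tupleK.
Qed.

Lemma iso_trans A B S : iso A B -> iso B S -> iso A S.
Proof.
case=> f [f_bij AB] [g [g_bij BS]]; exists (g \o f); split; first exact: bij_comp.
by move=> i t; rewrite -map_tuple_comp BS AB.
Qed.

Lemma restrict_pullback_eq_in B f g n :
  (forall x, x <= n -> f x = g x) ->
  restrict (pullback B f) n = restrict (pullback B g) n.
Proof.
move=> fg; congr pair; apply: functional_extensionality_dep => i.
apply: functional_extensionality => t; case tn: (all _ t) => //=.
congr (B i _); apply: val_inj; apply/eq_in_map => x xt; exact: fg (allP tn x xt).
Qed.

Lemma qsat_iso A B f e (q : qf sig) : injective f ->
  (forall i t, B i (map_tuple f t) = A i t) -> qsat B (f \o e) q = qsat A e q.
Proof.
move=> f_inj AB; elim: q => //= [x y|i xs|q ->|q1 -> q2 ->|q1 -> q2 ->] //.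
- by rewrite inj_eq.
- by rewrite -AB map_tuple_comp.
Qed.

Lemma sat_iso A B f g (phi : form sig) : cancel f g -> cancel g f ->
  (forall i t, B i (map_tuple f t) = A i t) ->
  forall e, sat B (f \o e) phi <-> sat A e phi.
Proof.
move=> fK gK AB; have f_inj := can_inj fK.
have upd_comp (ys : seq nat) e h : f \o (fun x => if x \in ys then h x else e x) =
    (fun x => if x \in ys then (f \o h) x else (f \o e) x).
  by apply: functional_extensionality => x /=; case: ifP.
have gK_comp (h : nat -> nat) : f \o (g \o h) = h.
  by apply: functional_extensionality => x /=; rewrite gK.
elim: phi => [q|P h IH|P h IH|ys psi IH|ys psi IH] e /=.
- by rewrite (qsat_iso _ _ f_inj AB).
- by split=> -[k [Pk hk]]; exists k; split=> //; apply/IH.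
- by split=> hk k Pk; apply/IH; exact: hk.
- split=> -[h hh]; last by exists (f \o h); rewrite -upd_comp; apply/IH.
  by exists (g \o h); apply/IH; rewrite upd_comp gK_comp.
- split=> hh h; first by have := hh (f \o h); rewrite -upd_comp => /IH.
  by rewrite -(gK_comp h) -upd_comp; apply/IH.
Qed.

Lemma qsat_eq_in A e1 e2 (q : qf sig) :
  {in qvars q, e1 =1 e2} -> qsat A e1 q = qsat A e2 q.
Proof.
elim: q => //= [x y|i xs|q IH|q1 IH1 q2 IH2|q1 IH1 q2 IH2] e12.
- by rewrite !e12 // !inE eqxx ?orbT.
- by congr (A i _); apply: val_inj; apply/eq_in_map.
- by rewrite IH.
- by rewrite IH1 ?IH2 // => x xq; apply: e12; rewrite mem_cat xq ?orbT.
- by rewrite IH1 ?IH2 // => x xq; apply: e12; rewrite mem_cat xq ?orbT.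
Qed.

Lemma sat_eq_in A (phi : form sig) xs e1 e2 :
  fv_in xs phi -> {in xs, e1 =1 e2} -> sat A e1 phi <-> sat A e2 phi.
Proof.
elim: phi xs e1 e2 => [q|P h IH|P h IH|ys psi IH|ys psi IH] xs e1 e2 /= fv e12.
- by rewrite (@qsat_eq_in _ e1 e2) // => x /(allP fv); exact: e12.
- have IHk k : P k -> sat A e1 (h k) <-> sat A e2 (h k).
    by move=> Pk; apply: IH (fv k Pk) e12.
  by split=> -[k [Pk hk]]; exists k; split=> //; apply/(IHk k Pk).
- have IHk k : P k -> sat A e1 (h k) <-> sat A e2 (h k).
    by move=> Pk; apply: IH (fv k Pk) e12.
  by split=> hk k Pk; apply/(IHk k Pk); exact: hk.
- have upd12 h : {in ys ++ xs, (fun x => if x \in ys then h x else e1 x) =1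
                               (fun x => if x \in ys then h x else e2 x)}.
    by move=> x; rewrite mem_cat; case: ifP => //= _; exact: e12.
  by split=> -[h /(IH _ _ _ fv (upd12 h)) hh]; exists h.
- have upd12 h : {in ys ++ xs, (fun x => if x \in ys then h x else e1 x) =1
                               (fun x => if x \in ys then h x else e2 x)}.
    by move=> x; rewrite mem_cat; case: ifP => //= _; exact: e12.
  by split=> hh h; move: (hh h) => /(IH _ _ _ fv (upd12 h)).
Qed.

Lemma models_iso A B (phi : form sig) :
  iso A B -> sentence phi -> models A phi -> models B phi.
Proof.
case=> f [[g fK gK] AB] phi_sent /(sat_iso phi fK gK AB).
by move/(@sat_eq_in B phi [::] _ _ phi_sent); apply.
Qed.

Lemma qsat_restrict S n e (q : qf sig) :
  all (fun x => e x <= n) (qvars q) -> qsat (restrict S n).2 e q = qsat S e q.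
Proof.
elim: q => //= [i xs|q IH|q1 IH1 q2 IH2|q1 IH1 q2 IH2].
- by move=> xsn; rewrite all_map xsn.
- by move=> qn; rewrite IH.
- by rewrite all_cat => /andP[q1n q2n]; rewrite IH1 ?IH2.
- by rewrite all_cat => /andP[q1n q2n]; rewrite IH1 ?IH2.
Qed.

End Isomorphism.

Fixpoint tuples_below (n N : nat) : seq (n.-tuple nat) :=
  if n is n'.+1 then
    flatten [seq [seq cons_tuple x t | t <- tuples_below n' N] | x <- iota 0 N]
  else [:: [tuple]].

Lemma all_tuples_belowP n N (P : pred (n.-tuple nat)) :
  all P (tuples_below n N) <-> (forall t : n.-tuple nat, all (fun x => x < N) t -> P t).
Proof.
elim: n P => [|n IH] P /=.
  by rewrite andbT; split=> [P0 t _|]; [rewrite tuple0 | apply].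
rewrite all_flatten all_map; split=> [PN t|PN].
- case/tupleP: t => x t /= /andP[xN tN].
  have := allP PN x; rewrite mem_iota /= all_map => /(_ xN) /IH; exact.
- apply/allP => x; rewrite mem_iota /= all_map => xN.
  by apply/IH => t tN; apply: PN; rewrite /= xN.
Qed.

Section Diagram.
Variable sig : seq nat.
Implicit Types (A B : structure sig) (e g : nat -> nat).

Definition same_diagram A e B g N : Prop :=
  (forall i (t : (arity i).-tuple nat), all (fun x => x < N) t ->
     A i (map_tuple e t) = B i (map_tuple g t)) /\
  (forall x y, x < N -> y < N -> (e x == e y) = (g x == g y)).

Definition injective_below g N := forall x y, x < N -> y < N -> g x = g y -> x = y.

Lemma same_diagram_injective A e B g N :
  same_diagram A e B g N -> injective_below e N <-> injective_below g N.
Proof.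
case=> _ eqeg; split=> inj x y xN yN /eqP exy; apply: inj => //; apply/eqP.
- by rewrite eqeg.
- by rewrite -eqeg.
Qed.

Lemma same_diagram_eq_in A e B g g' N : (forall x, x < N -> g x = g' x) ->
  same_diagram A e B g N -> same_diagram A e B g' N.
Proof.
move=> gg' [rel eqs]; split=> [i t tN|x y xN yN].
- rewrite rel //; congr (B i _); apply: val_inj; apply/eq_in_map => x xt.
  exact: gg' (allP tN x xt).
- by rewrite eqs // !gg'.
Qed.

Lemma same_diagram_self B e g N :
  (forall x, x < N -> e x = g x) -> same_diagram B e B g N.
Proof.
move=> eg; split=> [i t tN|x y xN yN]; last by rewrite !eg.
by congr (B i _); apply: val_inj; apply/eq_in_map => x xt; exact: eg (allP tN x xt).
Qed.

Lemma same_diagram_restrict A e B g N :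
  same_diagram A e B g N.+1 ->
  restrict (pullback A e) N = restrict (pullback B g) N.
Proof.
case=> rel _; congr pair; apply: functional_extensionality_dep => i.
by apply: functional_extensionality => t; case tN: (all _ t) => //=; exact: rel.
Qed.

Definition qAnd_seq (l : seq (qf sig)) : qf sig := foldr (@QAnd sig) (QTrue sig) l.

Lemma qsat_qAnd_seq A e l : qsat A e (qAnd_seq l) = all (qsat A e) l.
Proof. by elim: l => //= q l ->. Qed.

Lemma qvars_qAnd_seq l : qvars (qAnd_seq l) = flatten (map (@qvars sig) l).
Proof. by elim: l => //= q l ->. Qed.

Definition qLit (b : bool) (q : qf sig) : qf sig := if b then q else QNeg q.

Definition diagram B g N : qf sig :=
  qAnd_seq
    (flatten [seq [seq qLit (B i (map_tuple g t)) (QRel t) | t <- tuples_below (arity i) N]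
             | i <- enum 'I_(size sig)] ++
     flatten [seq [seq qLit (g x == g y) (QEq sig x y) | y <- iota 0 N] | x <- iota 0 N]).

Lemma qvars_qLit b q : qvars (qLit b q) = qvars q.
Proof. by case: b. Qed.

Lemma qsat_qLit A e b q : qsat A e (qLit b q) = (qsat A e q == b).
Proof. by case: b; rewrite /= ?eqbF_neg ?eqb_id. Qed.

Lemma diagramP A e B g N : qsat A e (diagram B g N) <-> same_diagram A e B g N.
Proof.
rewrite qsat_qAnd_seq all_cat !all_flatten !all_map.
split=> [/andP[/allP rel /allP eqs]|[rel eqs]].
- split=> [i t tN|x y xN yN].
  + move: (rel i (mem_index_enum i)); rewrite /= all_map => /all_tuples_belowP/(_ t tN).
    by rewrite /= qsat_qLit => /eqP.
  + move: (eqs x); rewrite mem_iota /= all_map => /(_ xN)/allP/(_ y).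
    by rewrite mem_iota /= qsat_qLit => /(_ yN)/eqP.
- apply/andP; split.
  + apply/allP => i _; rewrite /= all_map.
    by apply/all_tuples_belowP => t tN; rewrite /= qsat_qLit /= rel.
  + apply/allP => x; rewrite mem_iota /= all_map => xN.
    by apply/allP => y; rewrite mem_iota /= => yN; rewrite /= qsat_qLit /= eqs.
Qed.

Lemma qvars_diagram B g N : all (fun x => x < N) (qvars (diagram B g N)).
Proof.
rewrite qvars_qAnd_seq all_flatten all_map all_cat !all_flatten !all_map.
apply/andP; split.
- apply/allP => i _; rewrite /= all_map.
  by apply/all_tuples_belowP => t tN; rewrite /= qvars_qLit.
- apply/allP => x; rewrite mem_iota /= all_map => xN.
  by apply/allP => y; rewrite mem_iota /= => yN; rewrite qvars_qLit /= xN yN.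
Qed.

End Diagram.

Section ExtensionSentence.
Variable sig : seq nat.
Variables A B : structure sig.
Implicit Types (a b e g : nat -> nat) (m N : nat).

Definition seq_of_code (n : nat) : seq nat := odflt [::] (unpickle n).

Definition realized_over a m (s : seq nat) : Prop :=
  exists e, (forall x, x < m -> e x = a x) /\ qsat A e (diagram B (nth 0 s) (size s)).

Definition extension_clause a m n : qf sig :=
  let s := seq_of_code n in
  if (m <= size s) && classicb (~ realized_over a m s)
  then QNeg (diagram B (nth 0 s) (size s)) else QTrue sig.

(* B satisfies this sentence iff some b_0, ..., b_(m-1) in B has every finite extension
   of it realized in A over a_0, ..., a_(m-1): the clause indexed by a code of s forbids
   the extensions s that are not realized. *)
Definition extension_sentence a m : form sig :=
  FOr xpredT (fun _ => FEx (iota 0 m) (FAnd xpredT (fun n =>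
    FAll (iota m (size (seq_of_code n) - m)) (FQf (extension_clause a m n))))).

Lemma extension_sentence_Sigma2 a m : Sigma2_sentence (extension_sentence a m).
Proof.
split; first by split=> // k _; exists 1; split=> //; split=> // n _; exists 0.
move=> k _ n _ /=; rewrite /extension_clause; case: ifP => //= /andP[ms _].
apply/allP => x /(allP (qvars_diagram _ _ _)) /= xs.
by rewrite cats0 mem_cat !mem_iota subnKC // add0n xs; case: leqP.
Qed.

Lemma models_extension_sentence a m : models A (extension_sentence a m).
Proof.
exists 0; split=> //; exists a => n _ g /=; rewrite /extension_clause.
case: ifP => //= /andP[_ /classicbP not_realized]; apply/negP => diag.
apply: not_realized; eexists; split; last exact: diag.
by move=> x xm /=; rewrite !mem_iota leqNgt xm.
Qed.

Lemma models_extension_sentenceP a m : models B (extension_sentence a m) ->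
  exists b, forall g N, m <= N -> (forall x, x < m -> g x = b x) ->
    exists2 e, (forall x, x < m -> e x = a x) & same_diagram A e B g N.
Proof.
case=> k [_ [b sat_b]]; exists b => g N mN gb.
pose s := map g (iota 0 N).
have sg x : x < N -> nth 0 s x = g x by move=> xN; rewrite (nth_map 0) ?nth_iota ?size_iota.
have [e [ea /diagramP diag]] : realized_over a m s.
  apply: NNPP => not_realized; have := sat_b (pickle s) isT (nth 0 s).
  rewrite /= /extension_clause /seq_of_code pickleK /= size_map size_iota mN.
  rewrite (introT (classicbP _) not_realized) /=.
  move/negP; apply; apply/diagramP/same_diagram_self => x xN.
  rewrite mem_iota; case: (leqP m x) => mx /=; first by rewrite subnKC // xN.
  by rewrite mem_iota /= ?add0n mx sg ?gb // (leq_trans mx mN).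
exists e => //; move: diag; rewrite size_map size_iota; exact: same_diagram_eq_in.
Qed.

End ExtensionSentence.

Definition swapn (u v x : nat) : nat := if x == u then v else if x == v then u else x.

Lemma swapnK u v : involutive (swapn u v).
Proof.
move=> x; rewrite /swapn.
have [->|xu] := eqVneq x u; first by have [->|] := eqVneq v u; rewrite ?eqxx.
have [->|xv] := eqVneq x v; first by rewrite !eqxx.
by rewrite (negbTE xu) (negbTE xv).
Qed.

Lemma injective_below_extend b m : injective_below b m ->
  exists2 G, bijective G & forall x, x < m -> G x = b x.
Proof.
elim: m => [|m IH] b_inj; first by exists id => //; exists id.
have [G G_bij Gb] : exists2 G, bijective G & forall x, x < m -> G x = b x.
  by apply: IH => x y xm ym; apply: b_inj; rewrite ltnS ltnW.
exists (swapn (G m) (b m) \o G); first exact: bij_comp (inv_bij (swapnK _ _)) G_bij.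
move=> x; rewrite ltnS leq_eqVlt => /orP[/eqP->|xm] /=; first by rewrite /swapn eqxx.
rewrite (Gb x xm) /swapn.
have bx_Gm : b x != G m.
  by apply/eqP; rewrite -Gb // => /(bij_inj G_bij) xm'; rewrite xm' ltnn in xm.
have bx_bm : b x != b m.
  apply/eqP => /b_inj; rewrite ltnS ltnW // => /(_ isT (ltnSn m)) xm'.
  by rewrite xm' ltnn in xm.
by rewrite (negbTE bx_Gm) (negbTE bx_bm).
Qed.

Lemma chain_union_bijective (st : nat -> nat * (nat -> nat)) :
  (forall r, injective_below (st r).2 (st r).1) ->
  (forall r, (st r).1 < (st r.+1).1) ->
  (forall r x, x < (st r).1 -> (st r.+1).2 x = (st r).2 x) ->
  (forall r, exists2 x, x < (st r.+1).1 & (st r.+1).2 x = r) ->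
  exists2 F, bijective F & forall r x, x < (st r).1 -> F x = (st r).2 x.
Proof.
move=> st_inj st_lt st_ext st_onto.
have r_le r : r <= (st r).1 by elim: r => // r IH; exact: leq_ltn_trans IH (st_lt r).
have st_mono r r' : r <= r' -> (st r).1 <= (st r').1 /\
    forall x, x < (st r).1 -> (st r').2 x = (st r).2 x.
  move/subnKC <-; elim: (r' - r) => [|d [le_d ext_d]]; first by rewrite addn0.
  rewrite addnS; split; first exact: leq_trans le_d (ltnW (st_lt _)).
  by move=> x xr; rewrite st_ext ?ext_d //; exact: leq_trans xr le_d.
pose F x := (st x.+1).2 x.
have FE r x : x < (st r).1 -> F x = (st r).2 x.
  move=> xr; rewrite /F -((st_mono _ _ (leq_maxr r x.+1)).2 x) ?r_le //.
  by rewrite ((st_mono _ _ (leq_maxl r x.+1)).2 x).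
have F_inj : injective F.
  move=> x y Fxy; pose R := (maxn x y).+1.
  have xR : x < (st R).1 by apply: leq_trans (r_le R); rewrite ltnS leq_maxl.
  have yR : y < (st R).1 by apply: leq_trans (r_le R); rewrite ltnS leq_maxr.
  by apply: (st_inj R) => //; rewrite -(FE R x) // -(FE R y).
have F_onto y : exists x, F x == y.
  by have [x xy Fx] := st_onto y; exists x; rewrite (FE y.+1 x) ?Fx.
exists F => //; exists (fun y => xchoose (F_onto y)) => [x|y].
  by apply: F_inj; apply/eqP; exact: (xchooseP (F_onto (F x))).
exact/eqP/(xchooseP (F_onto y)).
Qed.

Lemma injective_below_extend_to a m r : injective_below a m ->
  exists m' a', [/\ m <= m', (forall x, x < m -> a' x = a x),
    (exists2 x, x < m' & a' x = r) & injective_below a' m'].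
Proof.
move=> a_inj; have [hit|miss] := classic (exists2 x, x < m & a x = r).
  by exists m, a.
exists m.+1, (fun x => if x < m then a x else r); split=> //.
- by move=> x ->.
- by exists m; rewrite ?ltnn.
move=> x y; rewrite !ltnS => xm ym.
case: (ltnP x m) => xm'; case: (ltnP y m) => ym' //.
- exact: a_inj.
- by move=> axr; case: miss; exists x.
- by move=> ray; case: miss; exists y.
- by move=> _; apply/eqP; rewrite eqn_leq (leq_trans xm ym') (leq_trans ym xm').
Qed.

Section Sigma2Inclusion.
Variable sig : seq nat.
Variables (I : Type) (K : I -> structure sig) (M : nat * structure sig -> option I).
Hypothesis M_learns : forall S, LD K S -> forall i,
  ((forall m, exists n, m <= n /\ M (restrict S n) = Some i) <-> iso (K i) S).
Variables i j : I.
Hypothesis Sigma2_incl : forall phi,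
  Sigma2_sentence phi -> models (K i) phi -> models (K j) phi.

(* [M] guesses [j] on a long initial segment of some copy of [K j] extending [b];
   the extension sentence realises that segment in [K i] over [a]. *)
Lemma extend_fooling_learner r m a : injective_below a m -> exists m' a',
  [/\ m < m', (forall x, x < m -> a' x = a x), (exists2 x, x < m' & a' x = r),
      injective_below a' m' & M (restrict (pullback (K i) a') m'.-1) = Some j].
Proof.
move=> a_inj.
have [m1 [a1 [mm1 a1a [x0 x0m1 a1x0] a1_inj]]] := injective_below_extend_to r a_inj.
have [b b_ext] := models_extension_sentenceP
  (Sigma2_incl (extension_sentence_Sigma2 _ _ a1 m1) (models_extension_sentence _ _ a1 m1)).
have b_inj : injective_below b m1.
  have [e ea1 /same_diagram_injective e_b] := b_ext b m1 (leqnn _) (fun _ _ => erefl).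
  by apply/e_b => x y xm ym; rewrite !ea1 //; exact: a1_inj.
have [G G_bij Gb] := injective_below_extend b_inj.
have G_copy := iso_pullback (K j) G_bij.
have [n [m1n Mn]] := (M_learns (ex_intro _ j G_copy) j).2 G_copy m1.
have [e ea1 diag] := b_ext G n.+1 (leqW m1n) Gb.
exists n.+1, e; split.
- by rewrite ltnS (leq_trans mm1 m1n).
- by move=> x xm; rewrite ea1 ?a1a //; exact: leq_trans xm mm1.
- by exists x0; rewrite ?ea1 // ltnS (leq_trans _ m1n) // ltnW.
- by apply/(same_diagram_injective diag) => x y _ _; exact: bij_inj.
- by rewrite /= (same_diagram_restrict diag).
Qed.

Lemma Sigma2_incl_eq : (forall i' j', iso (K i') (K j') -> i' = j') -> i = j.
Proof.
move=> K_inj.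
have step r (st : nat * (nat -> nat)) : exists st' : nat * (nat -> nat),
    injective_below st.2 st.1 ->
    [/\ st.1 < st'.1, (forall x, x < st.1 -> st'.2 x = st.2 x),
        (exists2 x, x < st'.1 & st'.2 x = r), injective_below st'.2 st'.1
      & M (restrict (pullback (K i) st'.2) st'.1.-1) = Some j].
  case: st => m a; have [a_inj|] := classic (injective_below a m); last by exists (m, a).
  by have [m' [a' ?]] := extend_fooling_learner r a_inj; exists (m', a').
pose next r st := proj1_sig (constructive_indefinite_description _ (step r st)).
have nextP r st := proj2_sig (constructive_indefinite_description _ (step r st)).
pose st r := iteri r next (0, id).
have st_inj r : injective_below (st r).2 (st r).1.
  by elim: r => [x y //|r IH]; case: (nextP r (st r) IH).
have st_next r := nextP r (st r) (st_inj r).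
have [F F_bij Fst] : exists2 F, bijective F & forall r x, x < (st r).1 -> F x = (st r).2 x.
  by apply: chain_union_bijective => // r; case: (st_next r).
have S_copy := iso_pullback (K i) F_bij.
suff jS : iso (K j) (pullback (K i) F) by apply/K_inj/(iso_trans S_copy (iso_sym jS)).
apply: (M_learns (ex_intro _ i S_copy) j).1 => m.
have st_ge r : r <= (st r).1.
  by elim: r => // r IH; case: (st_next r) => lt_st _ _ _ _; exact: leq_ltn_trans IH lt_st.
have st_pos : 0 < (st m.+1).1 by exact: leq_trans (st_ge m.+1).
have [_ _ _ _ M_st] := st_next m.
exists (st m.+1).1.-1; split; first by rewrite -ltnS prednK ?st_ge.
rewrite -M_st; congr M; apply: restrict_pullback_eq_in => x x_lt.
by apply: (Fst m.+1); rewrite -(prednK st_pos) ltnS; exact: x_lt.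
Qed.

End Sigma2Inclusion.

Lemma PL_learnable_Sigma2_antichain (sig : seq nat) (I : Type) (K : I -> structure sig) :
  (forall i j, iso (K i) (K j) -> i = j) -> PL_learnable K -> Sigma2_antichain K.
Proof.
move=> K_inj [M M_learns].
have separate i j : i <> j ->
    exists phi, [/\ Sigma2_sentence phi, models (K i) phi & ~ models (K j) phi].
  move=> ij; apply: NNPP => none; apply/ij/(Sigma2_incl_eq M_learns _ K_inj).
  by move=> phi phi_S2 phi_i; apply: NNPP => phi_j; apply: none; exists phi.
move=> i j ij; have [phi [phi_S2 phi_i phi_j]] := separate i j ij.
have [psi [psi_S2 psi_j psi_i]] := separate j i (nesym ij).
by exists phi, psi.
Qed.

Section Refutation.
Variable sig : seq nat.
Implicit Types (S : structure sig) (e g : nat -> nat) (d : nat * structure sig).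

Definition upd (ys : seq nat) g e : nat -> nat := fun x => if x \in ys then g x else e x.

Definition refutes_qf (q : qf sig) e d : Prop :=
  all (fun x => e x <= d.1) (qvars q) /\ ~~ qsat d.2 e q.

(* Shapes other than those of [Pi1_shape] are never refuted. *)
Definition refutes_Pi1 (psi : form sig) e d : Prop :=
  match psi with
  | FQf q => refutes_qf q e d
  | FAnd P h => exists2 l, P l &
      if h l is FAll ys (FQf q) then exists g, refutes_qf q (upd ys g e) d else False
  | _ => False
  end.

(* [c = (k, s)] proposes the [k]-th disjunct with witnesses [nth 0 s]. *)
Definition refutes_witness (phi : form sig) (c : nat * seq nat) d : Prop :=
  if phi is FOr P f then ~~ P c.1 \/
    (if f c.1 is FEx ys psi then refutes_Pi1 psi (upd ys (nth 0 c.2) (fun=> 0)) d else False)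
  else False.

Lemma refutes_qf_mono S q e n n' : n <= n' ->
  refutes_qf q e (restrict S n) -> refutes_qf q e (restrict S n').
Proof.
move=> nn' [qn not_q]; have qn' : all (fun x => e x <= n') (qvars q).
  by apply: sub_all qn => x /= /leq_trans; apply.
by split=> //=; rewrite qsat_restrict // -(qsat_restrict S qn).
Qed.

Lemma refutes_qf_false S q e n : refutes_qf q e (restrict S n) -> ~~ qsat S e q.
Proof. by case=> qn; rewrite qsat_restrict. Qed.

Lemma exists_refutes_qf S q e : ~~ qsat S e q -> exists n, refutes_qf q e (restrict S n).
Proof.
move=> not_q; have qn : all (fun x => e x <= \max_(y <- qvars q) e y) (qvars q).
  by apply/allP => x xq; exact: leq_bigmax_seq.
by exists (\max_(y <- qvars q) e y); split; rewrite //= qsat_restrict.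
Qed.

Lemma refutes_witness_mono S phi c n n' : n <= n' ->
  refutes_witness phi c (restrict S n) -> refutes_witness phi c (restrict S n').
Proof.
move=> nn'; case: phi => //= P f [notP|refuted]; [by left | right]; move: refuted.
case: (f c.1) => // ys psi; case: psi => //= [q|P' h]; first exact: refutes_qf_mono.
case=> l P'l ref; exists l => //; move: ref.
case: (h l) => [? []|? ? []|? ? []|? ? []|ys' psi'].
case: psi' => [q [g ref]|? ? []|? ? []|? ? []|? ? []].
by exists g; exact: refutes_qf_mono ref.
Qed.

Lemma Pi1_shape b (psi : form sig) : b < 2 -> isPi b psi ->
  (exists q, psi = FQf q) \/
  (exists P h, psi = FAnd P h /\ forall l, P l -> exists ys q, h l = FAll ys (FQf q)).
Proof.
move=> b2; case: psi => [q|P h|P h|ys p|ys p] //= psi_Pi; first by left; exists q.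
right; exists P, h; split=> // l Pl; case: psi_Pi => _ /(_ l Pl).
case: (h l) => // ys chi [b' [b'b chi_S]].
have b'0 : b' = 0 by case: b b2 b'b {chi_S} => [|[|]] //; case: b'.
rewrite b'0 in chi_S; case: chi chi_S => [q _|? ? [] //|? ? []|? ? []|? ? []].
by exists ys, q.
Qed.

Lemma sat_Pi1P S b (psi : form sig) e : b < 2 -> isPi b psi ->
  sat S e psi <-> forall n, ~ refutes_Pi1 psi e (restrict S n).
Proof.
move=> b2 /(Pi1_shape b2) [[q ->]|[P [h [-> h_shape]]]] /=.
  split=> [q_true n /refutes_qf_false|q_unrefuted]; first by rewrite q_true.
  by apply/negPn/negP => /exists_refutes_qf [n /q_unrefuted].
split=> [h_true n [l Pl]|h_unrefuted l Pl]; have [ys [q hl]] := h_shape l Pl.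
  by rewrite hl => -[g /refutes_qf_false]; have := h_true l Pl; rewrite hl /= => ->.
rewrite hl /= => g; apply/negPn/negP => /exists_refutes_qf [n ref].
by apply: (h_unrefuted n); exists l => //; rewrite hl; exists g.
Qed.

Lemma models_Sigma2P S (phi : form sig) : Sigma2_sentence phi ->
  models S phi <-> exists c, forall n, ~ refutes_witness phi c (restrict S n).
Proof.
case=> phi_S2 _; case: phi phi_S2 => // P f [_ f_shape] /=.
split=> [[k [Pk]]|[[k s] unrefuted]].
- have := f_shape k Pk; case E: (f k) => // [ys psi] [b [b2 psi_Pi]] /= [g g_sat].
  pose s := map g (iota 0 (\max_(y <- ys) y).+1).
  have upd_s : upd ys (nth 0 s) (fun=> 0) = upd ys g (fun=> 0).
    apply: functional_extensionality => x; rewrite /upd; case: ifP => // xys.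
    by rewrite (nth_map 0) ?nth_iota ?size_iota ?ltnS //; exact: leq_bigmax_seq.
  exists (k, s) => n /=; rewrite Pk E upd_s /= => -[] // ref.
  exact: (sat_Pi1P _ _ b2 psi_Pi).1 g_sat n ref.
- have Pk : P k by apply/negPn/negP => not_Pk; apply: (unrefuted 0); left.
  exists k; split=> //; have := f_shape k Pk; case E: (f k) => // [ys psi] [b [b2 psi_Pi]].
  exists (nth 0 s); apply/(sat_Pi1P _ _ b2 psi_Pi) => n ref.
  by apply: (unrefuted n); right; rewrite /= E.
Qed.

End Refutation.

Lemma restrict_restrict (sig : seq nat) (S : structure sig) n :
  restrict (restrict S n).2 n.-1 = restrict S n.-1.
Proof.
congr pair; apply: functional_extensionality_dep => i.
apply: functional_extensionality => t /=; case tn: (all _ t) => //=.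
by rewrite (sub_all _ tn) // => x /= /leq_trans; apply; exact: leq_pred.
Qed.

Lemma count_iota0_mono (a : pred nat) n n' :
  n <= n' -> count a (iota 0 n) <= count a (iota 0 n').
Proof. by move=> nn'; rewrite -(subnKC nn') iotaD count_cat leq_addr. Qed.

Section Steps.
Variable f : nat -> nat.
Hypothesis f_mono : {homo f : n m / n <= m}.

Lemma unbounded_steps : (forall L, exists n, L <= f n) ->
  forall m, exists n, m <= n /\ f n.-1 < f n.
Proof.
move=> f_unb m; have [n1 fn1] := f_unb (f m).+1.
have mn1 : m <= n1.
  by rewrite leqNgt; apply/negP => /ltnW/f_mono; rewrite leqNgt fn1.
suff step k : f m < f (m + k) -> exists n, m <= n /\ f n.-1 < f n.
  by apply: (step (n1 - m)); rewrite subnKC.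
elim: k => [|k IH]; first by rewrite addn0 ltnn.
rewrite addnS => fmk; case: (ltnP (f m) (f (m + k))) => [|fk]; first exact: IH.
by exists (m + k).+1; split; [rewrite -addnS leq_addr | exact: leq_ltn_trans fk fmk].
Qed.

Lemma bounded_eventually_no_step B : (forall n, f n <= B) ->
  exists N, forall n, N <= n -> ~ f n.-1 < f n.
Proof.
move=> f_bnd; apply: NNPP => steps.
have f_unb L : exists n, L <= f n.
  elim: L => [|L [n fn]]; first by exists 0.
  have [n' [nn' step]] : exists n', n.+1 <= n' /\ f n'.-1 < f n'.
    apply: NNPP => none; apply: steps; exists n.+1 => n' nn' step'; apply: none; by exists n'.
  by exists n'; apply: leq_ltn_trans step; apply: leq_trans fn (f_mono _); case: n' nn'.
by have [n] := f_unb B.+1; rewrite leqNgt ltnS f_bnd.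
Qed.

End Steps.

Lemma eventually_forall_below (P : nat -> nat -> Prop) K :
  (forall k, k < K -> exists N, forall n, N <= n -> P k n) ->
  exists N, forall n, N <= n -> forall k, k < K -> P k n.
Proof.
elim: K => [|K IH] PK; first by exists 0.
have [N1 P1] := IH (fun k kK => PK k (ltnW kK)); have [N2 P2] := PK K (ltnSn K).
exists (maxn N1 N2) => n; rewrite geq_max => /andP[N1n N2n] k.
by rewrite ltnS leq_eqVlt => /orP[/eqP->|kK]; [exact: P2 | exact: P1].
Qed.

Section Learner.
Variable sig : seq nat.
Variables (I : Type) (K : I -> structure sig) (code : I -> nat).
Hypothesis code_inj : injective code.
Hypothesis K_inj : forall i j, iso (K i) (K j) -> i = j.
Variable phi : I -> I -> form sig.
Hypothesis phi_sep : forall i j, i <> j ->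
  [/\ Sigma2_sentence (phi i j), models (K i) (phi i j) & ~ models (K j) (phi i j)].
Implicit Types (S : structure sig) (d : nat * structure sig).

(* [p] codes a pair [(code j, c)] with [c] a candidate witness for [phi j i];
   on a copy of [K i] every such witness is eventually refuted, on any other [S]
   in [LD K] some witness never is. *)
Definition witness_refuted (i : I) (p : nat) d : Prop :=
  if unpickle p : option (nat * (nat * seq nat)) is Some (k, c) then
    forall j, code j = k -> j <> i -> refutes_witness (phi j i) c d
  else True.

Definition refutation_level i d : nat :=
  count (fun p => classicb (forall p', p' <= p -> witness_refuted i p' d)) (iota 0 d.1).

Definition level_grows i d : Prop :=
  refutation_level i (restrict d.2 d.1.-1) < refutation_level i d.

Definition first_growing i d : Prop :=
  level_grows i d /\ forall i', level_grows i' d -> code i <= code i'.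

Definition learner d : option I :=
  match excluded_middle_informative (exists i, first_growing i d) with
  | left ex_i => Some (proj1_sig (constructive_indefinite_description _ ex_i))
  | right _ => None
  end.

Lemma learnerP d i : learner d = Some i <-> first_growing i d.
Proof.
rewrite /learner; case: excluded_middle_informative => [ex_i|no_i]; last first.
  by split=> // i_first; case: no_i; exists i.
case: (constructive_indefinite_description _ ex_i) => i0 [i0_grows i0_first] /=.
split=> [[<-] //|[i_grows i_first]]; congr Some; apply: code_inj; apply/eqP.
by rewrite eqn_leq i0_first ?i_first.
Qed.

Lemma level_grows_restrict S i n :
  level_grows i (restrict S n) =
  (refutation_level i (restrict S n.-1) < refutation_level i (restrict S n)).
Proof. by rewrite /level_grows /= restrict_restrict. Qed.

Lemma witness_refuted_mono S i p n n' : n <= n' ->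
  witness_refuted i p (restrict S n) -> witness_refuted i p (restrict S n').
Proof.
rewrite /witness_refuted => nn'; case: unpickle => // -[k c] ref j cj ji.
exact: refutes_witness_mono nn' (ref j cj ji).
Qed.

Lemma refutation_level_mono S i :
  {homo (fun n => refutation_level i (restrict S n)) : n n' / n <= n'}.
Proof.
move=> n n' nn' /=; apply: leq_trans (count_iota0_mono _ nn').
apply: sub_count => p /classicbP ref; apply/classicbP => p' p'p.
exact: witness_refuted_mono nn' (ref p' p'p).
Qed.

Lemma refutation_level_unbounded S i :
  (forall p, exists n, witness_refuted i p (restrict S n)) ->
  forall L, exists n, L <= refutation_level i (restrict S n).
Proof.
move=> ref_all L.
have [n [Ln ref_n]] : exists n, L <= n /\ forall p, p < L -> witness_refuted i p (restrict S n).
  elim: L => [|L [n [Ln ref_n]]]; first by exists 0.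
  have [nL ref_L] := ref_all L.
  exists (maxn (maxn n nL) L.+1); split; first exact: leq_maxr.
  move=> p; rewrite ltnS leq_eqVlt => /orP[/eqP->|pL].
    by apply: witness_refuted_mono ref_L; rewrite !leq_max leqnn ?orbT.
  by apply: witness_refuted_mono (ref_n p pL); rewrite !leq_max leqnn.
exists n; apply: leq_trans (count_iota0_mono _ Ln); set a := (X in count X _).
suff /eqP -> : count a (iota 0 L) == L by [].
rewrite -[X in _ == X](size_iota 0 L) -all_count; apply/allP => p; rewrite mem_iota => /= pL.
by apply/classicbP => p' p'p; apply: ref_n; exact: leq_ltn_trans p'p pL.
Qed.

Lemma refutation_level_bounded S i p0 :
  (forall n, ~ witness_refuted i p0 (restrict S n)) ->
  forall n, refutation_level i (restrict S n) <= p0.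
Proof.
move=> unrefuted n; rewrite /refutation_level /=; set a := (X in count X _).
have [np0|p0n] := leqP n p0; first by rewrite (leq_trans (count_size _ _)) ?size_iota.
rewrite -(subnKC (ltnW p0n)) iotaD count_cat.
have -> : count a (iota p0 (n - p0)) = 0.
  apply/eqP; rewrite -leqn0 leqNgt -has_count; apply/hasP => -[p].
  by rewrite mem_iota => /andP[p0p _] /classicbP/(_ p0 p0p)/unrefuted.
by rewrite addn0 (leq_trans (count_size _ _)) ?size_iota.
Qed.

Lemma iso_iff_witnesses_refuted S i : LD K S ->
  iso (K i) S <-> forall p, exists n, witness_refuted i p (restrict S n).
Proof.
case=> i0 i0S; split=> [iS p|ref_all].
  rewrite /witness_refuted; case: (unpickle p) => [[k c]|]; last by exists 0.
  have [[j [cj ji]]|no_j] := classic (exists j, code j = k /\ j <> i); last first.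
    by exists 0 => j cj ji; case: no_j; exists j.
  have [phi_S2 phi_j phi_i] := phi_sep ji.
  have not_S : ~ models S (phi j i) by move/(models_iso (iso_sym iS) phi_S2.2).
  have [n ref] : exists n, refutes_witness (phi j i) c (restrict S n).
    apply: NNPP => unrefuted; apply/not_S/(models_Sigma2P S phi_S2).
    by exists c => n ref; apply: unrefuted; exists n.
  by exists n => j' cj'; rewrite (code_inj (etrans cj' (esym cj))).
apply: NNPP => not_iS; have i0i : i0 <> i by move=> i0i; apply: not_iS; rewrite -i0i.
have [phi_S2 phi_i0 _] := phi_sep i0i.
have [c unrefuted] := (models_Sigma2P S phi_S2).1 (models_iso i0S phi_S2.2 phi_i0).
have [n] := ref_all (pickle (code i0, c)).
by rewrite /witness_refuted pickleK => /(_ i0 erefl i0i); exact: unrefuted.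
Qed.

Lemma not_iso_level_stabilizes S i : LD K S -> ~ iso (K i) S ->
  exists N, forall n, N <= n -> ~ level_grows i (restrict S n).
Proof.
move=> S_LD not_iS.
have [p0 unrefuted] : exists p0, forall n, ~ witness_refuted i p0 (restrict S n).
  apply: NNPP => none; apply/not_iS/(iso_iff_witnesses_refuted i S_LD) => p.
  by apply: NNPP => none_p; apply: none; exists p => n ref; apply: none_p; exists n.
have [N stable] := bounded_eventually_no_step (refutation_level_mono S i)
  (refutation_level_bounded unrefuted).
by exists N => n Nn; rewrite level_grows_restrict; exact: stable.
Qed.

Lemma learner_PL_learns : forall S, LD K S -> forall i,
  ((forall m, exists n, m <= n /\ learner (restrict S n) = Some i) <-> iso (K i) S).
Proof.
move=> S S_LD i; split=> [guess_i|iS].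
  apply: NNPP => not_iS; have [N stable] := not_iso_level_stabilizes S_LD not_iS.
  by have [n [Nn /learnerP [grows _]]] := guess_i N; exact: stable n Nn grows.
have [N others_stable] : exists N, forall n, N <= n -> forall k, k < code i ->
    forall i', code i' = k -> i' <> i -> ~ level_grows i' (restrict S n).
  apply: eventually_forall_below => k _.
  have [[i' [ci' i'i]]|none] := classic (exists i', code i' = k /\ i' <> i); last first.
    by exists 0 => n _ i' ci' i'i _; apply: none; exists i'.
  have not_i'S : ~ iso (K i') S by move/iso_trans/(_ (iso_sym iS))/K_inj.
  have [N stable] := not_iso_level_stabilizes S_LD not_i'S.
  by exists N => n Nn i'' ci''; rewrite (code_inj (etrans ci'' (esym ci'))) => _; exact: stable.
move=> m; have [n [mNn grows]] := unbounded_steps (refutation_level_mono S i)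
  (refutation_level_unbounded ((iso_iff_witnesses_refuted i S_LD).1 iS)) (maxn m N).
move: mNn; rewrite geq_max => /andP[mn Nn]; exists n; split=> //.
apply/learnerP; split=> [|i' i'_grows]; first by rewrite level_grows_restrict.
rewrite leqNgt; apply/negP => ci'; have i'i : i' <> i by move=> i'i; rewrite i'i ltnn in ci'.
exact: others_stable Nn _ ci' i' erefl i'i i'_grows.
Qed.

End Learner.

Lemma Sigma2_antichain_PL_learnable (sig : seq nat) (I : Type) (K : I -> structure sig) :
  structure_family K -> Sigma2_antichain K -> PL_learnable K.
Proof.
case=> -[code code_inj] K_inj antichain.
have separating i j : exists phi, i <> j ->
    [/\ Sigma2_sentence phi, models (K i) phi & ~ models (K j) phi].
  have [-> | ij] := classic (i = j); first by exists (FQf (QTrue sig)).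
  by have [phi [psi [? [? [? [? _]]]]]] := antichain i j ij; exists phi.
pose phi i j := proj1_sig (constructive_indefinite_description _ (separating i j)).
have phi_sep i j := proj2_sig (constructive_indefinite_description _ (separating i j)).
by exists (learner code phi); exact: (@learner_PL_learns _ _ K code code_inj K_inj phi phi_sep).
Qed.

Theorem mainTheorem14 (sig : seq nat) (I : Type) (K : I -> structure sig) :
  structure_family K -> (PL_learnable K <-> Sigma2_antichain K).
Proof.
move=> K_family; split; last exact: Sigma2_antichain_PL_learnable.
by apply: PL_learnable_Sigma2_antichain; case: K_family.
Qed.
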